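(* There is an absolute constant $K$ such that for every integer $n \ge 1$ and every integer $c$ with $0 \le c < n$, there is a deterministic finite automaton with at most $K n^2$ states (not counting a dead state) accepting the language $$L_{n,c} = \{ x \times y \in (\{0,1\}\times\{0,1\})^* : x, y \text{ valid Fibonacci representations of equal length},\ [y] = n[x] + c \},$$ read most significant digit first.
   Context: Fibonacci numbers: $F_0=0$, $F_1=1$, $F_k=F_{k-1}+F_{k-2}$. For a binary word $x = x_1\cdots x_\ell$, $[x] = \sum_{j=1}^{\ell} x_j F_{\ell-j+2}$. A valid Fibonacci representation is a binary word with no factor $11$; leading zeros allowed. For words $x,y$ of equal length, $x\times y$ is the word over $\{0,1\}^2$ with first component $x$ and second component $y$. *)

From mathcomp Require Import all_boot.
Set Implicit Arguments. Unset Strict Implicit. Unset Printing Implicit Defensive.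

Fixpoint fib (n : nat) : nat :=
  match n with
  | 0 => 0
  | m.+1 => match m with 0 => 1 | k.+1 => fib m + fib k end
  end.

(* [x] = sum_{j=1}^{l} x_j F_{l-j+2}; here j is 0-indexed, so F_{l-j+1} *)
Definition fibval (x : seq bool) : nat :=
  \sum_(j < size x) nth false x j * fib (size x - j + 1).

(* valid Fibonacci representation: no factor 11 (leading zeros allowed) *)
Definition fib_valid (x : seq bool) : bool :=
  all (fun p : bool * bool => ~~ (p.1 && p.2)) (zip x (behead x)).

(* the language L_{n,c} over the alphabet {0,1} x {0,1};
   a word w over pairs is x \times y with x = map fst w, y = map snd w
   (automatically of equal length) *)
Definition L_nc (n c : nat) (w : seq (bool * bool)) : bool :=
  let x := map fst w in
  let y := map snd w in
  [&& fib_valid x, fib_valid y & fibval y == n * fibval x + c].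

(* A (partial) deterministic finite automaton on the state set Q: a missing
   transition (None) means going to the (uncounted) dead state. *)
Record dfa (Q : finType) := DFA {
  dfa_start : Q;
  dfa_delta : Q -> bool * bool -> option Q;
  dfa_final : {set Q}
}.

Definition dfa_run (Q : finType) (A : dfa Q) (w : seq (bool * bool)) : option Q :=
  foldl (fun q a => obind (fun s => dfa_delta A s a) q) (Some (dfa_start A)) w.

Definition dfa_accepts (Q : finType) (A : dfa Q) (w : seq (bool * bool)) : bool :=
  if dfa_run A w is Some s then s \in dfa_final A else false.

(* Reading [x \times y] digit pair by digit pair, the quantity [[y] - n [x]] of
   the prefix read so far, together with the same sum taken with all Fibonacci
   indices lowered by one, evolves by an affine map of the plane.  On prefixes
   of words of [L_{n,c}] both coordinates are at most [6n] in absolute value: the prefix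
   itself forces [|F_t d1 - F_{t+1} d2| <= n F_{t+1}], while the value [c] of the
   whole word and the remaining suffix of length [m] force
   [|F_{m+1} d1 + F_m d2| <= n F_{m+4}]; solving this 2x2 system bounds [d1]
   and [d2].  Storing the pair and the last digits of [x] and [y] (for the
   no-[11] condition) therefore takes [O(n^2)] states. *)

From mathcomp Require Import all_boot all_order all_algebra.
From mathcomp Require Import zify ring lra.
Import Order.TTheory GRing.Theory Num.Theory.

Set Implicit Arguments.
Unset Strict Implicit.
Unset Printing Implicit Defensive.

Lemma fibSS k : fib k.+2 = fib k.+1 + fib k.
Proof. by []. Qed.

Lemma fib_leS k : fib k <= fib k.+1.
Proof. by case: k => // k; rewrite fibSS leq_addr. Qed.

Lemma fib_gt0 k : 0 < fib k.+1.
Proof. by elim: k => // k IH; rewrite fibSS ltn_addr. Qed.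

Lemma fibval_cons b x : fibval (b :: x) = b * fib (size x).+2 + fibval x.
Proof. by rewrite /fibval [size (b :: x)]/= big_ord_recl subn0 addn1. Qed.

Lemma fibval_le x : fibval x <= fib (size x).+3.
Proof.
elim: x => [|b x IH]; first by rewrite /fibval big_ord0.
by rewrite fibval_cons [size _]/= (fibSS (size x).+2); case: b; lia.
Qed.

Lemma fib_valid_rcons x b :
  fib_valid (rcons x b) = fib_valid x && ~~ (last false x && b).
Proof.
elim: x => [|a [|c x] IH] //=; first by rewrite /fib_valid /= andbT.
by move: IH; rewrite /fib_valid /= => ->; rewrite andbA.
Qed.

Section LinearSystem.
Local Open Scope ring_scope.

Lemma cramer_norm_le (R : realDomainType) (a b u v x y P Q : R) :
  0 <= a -> 0 <= b -> 0 <= u -> 0 <= v ->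
  `|a * x - b * y| <= P -> `|v * x + u * y| <= Q ->
  `|(b * v + a * u) * x| <= b * Q + u * P /\ `|(b * v + a * u) * y| <= a * Q + v * P.
Proof.
move=> a_ge0 b_ge0 u_ge0 v_ge0 le_P le_Q.
have norm_comb (r s : R) X Y : 0 <= r -> 0 <= s -> `|X| <= Q -> `|Y| <= P ->
    `|r * X + s * Y| <= r * Q + s * P.
  move=> r_ge0 s_ge0 le_X le_Y; apply: le_trans (ler_normD _ _) _.
  rewrite !normrM (ger0_norm r_ge0) (ger0_norm s_ge0).
  by apply: lerD; apply: ler_wpM2l.
split.
- have -> : (b * v + a * u) * x = b * (v * x + u * y) + u * (a * x - b * y) by ring.
  exact: norm_comb.
- have -> : (b * v + a * u) * y = a * (v * x + u * y) + v * - (a * x - b * y) by ring.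
  by apply: norm_comb; rewrite ?normrN.
Qed.

Lemma system_norm_le (R : realDomainType) (a b u v x y N : R) :
  0 <= a <= b -> 0 <= u <= v -> 1 <= b -> 1 <= v -> 0 <= N ->
  `|a * x - b * y| <= N * b -> `|v * x + u * y| <= N * (3 * v + 2 * u) ->
  `|x| <= 6 * N /\ `|y| <= 6 * N.
Proof.
move=> /andP[a_ge0 a_le_b] /andP[u_ge0 u_le_v] b_ge1 v_ge1 N_ge0 past future.
have b_ge0 : 0 <= b by lra.
have v_ge0 : 0 <= v by lra.
have [] := cramer_norm_le a_ge0 b_ge0 u_ge0 v_ge0 past future.
have bu_le_bv : b * u <= b * v by rewrite ler_wpM2l.
have au_le_av : a * u <= a * v by rewrite ler_wpM2l.
have av_le_bv : a * v <= b * v by rewrite ler_wpM2r.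
have au_ge0 : 0 <= a * u by rewrite mulr_ge0.
have bv_ge1 : 1 <= b * v by rewrite -[1]mulr1 ler_pM.
have D_gt0 : 0 < b * v + a * u by lra.
rewrite !normrM (gtr0_norm D_gt0) !(mulrCA _ N) -!mulrDr => le_x le_y.
have le_6N (z s : R) : s <= 6 * (b * v + a * u) ->
    (b * v + a * u) * `|z| <= N * s -> `|z| <= 6 * N.
  move=> s_le z_le; rewrite -(ler_pM2l D_gt0) (le_trans z_le) //.
  by rewrite [X in _ <= X](_ : _ = N * (6 * (b * v + a * u))) ?ler_wpM2l //; ring.
by split; [apply: le_6N le_x | apply: le_6N le_y]; lra.
Qed.

End LinearSystem.

Section Balance.
Local Open Scope ring_scope.
Variable n : nat.

Local Notation F k := (fib k)%:Z.

Lemma fibSSz k : F k.+2 = F k.+1 + F k.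
Proof. by rewrite fibSS PoszD. Qed.

Definition excess (a : bool * bool) : int := (a.2 : nat)%:Z - n%:Z * (a.1 : nat)%:Z.

Definition balance_step (d : int * int) (a : bool * bool) : int * int :=
  (d.1 + d.2 + excess a, d.1 + excess a).

(* [(balance w).1] is [[y] - n [x]] for [w = x \times y], and [(balance w).2]
   is the same sum with every Fibonacci index lowered by one. *)
Definition balance (w : seq (bool * bool)) : int * int := foldl balance_step (0, 0) w.

Lemma foldl_balance_step d1 d2 s :
  foldl balance_step (d1, d2) s =
  (F (size s).+1 * d1 + F (size s) * d2 + (balance s).1,
   F (size s) * d1 + (F (size s).+1 - F (size s)) * d2 + (balance s).2).
Proof.
elim: s d1 d2 => [|a s IH] d1 d2 /=; first by congr (_, _); ring.
rewrite /balance /= !IH /= !fibSSz; congr (_, _); ring.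
Qed.

Lemma balance_cat1 p s : (balance (p ++ s)).1 =
  F (size s).+1 * (balance p).1 + F (size s) * (balance p).2 + (balance s).1.
Proof.
rewrite {1}/balance foldl_cat -/(balance p).
by case: (balance p) => d1 d2; rewrite foldl_balance_step.
Qed.

Lemma balance1 w :
  (balance w).1 = (fibval (map snd w))%:Z - n%:Z * (fibval (map fst w))%:Z.
Proof.
elim: w => [|a w IH]; first by rewrite /balance /fibval /= !big_ord0 mulr0 subr0.
rewrite -cat1s balance_cat1 IH /= !fibval_cons !size_map !PoszD !PoszM fibSSz /excess.
ring.
Qed.

Hypothesis n_gt0 : (0 < n)%N.

Lemma excess_norm a : `|excess a| <= n%:Z.
Proof. by case: a => [[] []]; rewrite /excess /=; lia. Qed.

Lemma balance_past p :
  `|F (size p) * (balance p).1 - F (size p).+1 * (balance p).2| <= n%:Z * F (size p).+1.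
Proof.
elim/last_ind: p => [|p a IH]; first by rewrite /balance /= !mulr0 subr0 normr0.
rewrite /balance foldl_rcons -/(balance p) size_rcons.
set d := balance p in IH *.
have e_le : `|F (size p) * excess a| <= n%:Z * F (size p).
  by rewrite normrM ger0_norm // mulrC ler_wpM2r // excess_norm.
have -> : F (size p).+1 * (d.1 + d.2 + excess a) - F (size p).+2 * (d.1 + excess a) =
  - (F (size p) * d.1 - F (size p).+1 * d.2) - F (size p) * excess a by rewrite fibSSz; ring.
rewrite fibSSz (mulrDr n%:Z) (le_trans (ler_normB _ _)) // normrN.
exact: lerD.
Qed.

Variable c : nat.
Hypothesis c_lt_n : (c < n)%N.

Lemma balance_future p s : L_nc n c (p ++ s) ->
  `|F (size s).+1 * (balance p).1 + F (size s) * (balance p).2| <= n%:Z * F (size s).+4.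
Proof.
case/and3P=> _ _ /eqP val_ps.
have : (balance (p ++ s)).1 = c%:Z by rewrite balance1 val_ps PoszD PoszM; ring.
rewrite balance_cat1 => val_ps_eq.
have -> : F (size s).+1 * (balance p).1 + F (size s) * (balance p).2 =
  c%:Z - (balance s).1 by rewrite -val_ps_eq; ring.
rewrite balance1.
set X := fibval (map fst s); set Y := fibval (map snd s).
have X_le : X%:Z <= F (size s).+3 by rewrite lez_nat -(size_map fst) fibval_le.
have Y_le : Y%:Z <= F (size s).+3 by rewrite lez_nat -(size_map snd) fibval_le.
have F2_ge1 : 1 <= F (size s).+2 by rewrite lez_nat fib_gt0.
have nX_le : n%:Z * X%:Z <= n%:Z * F (size s).+3 by rewrite ler_wpM2l.
have F3_le : F (size s).+3 <= n%:Z * F (size s).+3.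
  by rewrite ler_peMl // lez_nat.
have n_le : n%:Z <= n%:Z * F (size s).+2 by rewrite ler_peMr.
rewrite (fibSSz (size s).+2) mulrDr; lia.
Qed.

Definition window_radius : nat := 6 * n.

Definition in_window (d : int * int) : bool :=
  (`|d.1| <= window_radius%:Z) && (`|d.2| <= window_radius%:Z).

Lemma balance_take_in_window w k : L_nc n c w -> in_window (balance (take k w)).
Proof.
rewrite -{1}(cat_take_drop k w) => /balance_future future.
have past := balance_past (take k w).
have F4E m : F m.+4 = 3 * F m.+1 + 2 * F m by rewrite !fibSSz; ring.
have F_mono m : 0 <= F m <= F m.+1 by rewrite lez_nat fib_leS.
have F_ge1 m : 1 <= F m.+1 by rewrite lez_nat fib_gt0.
rewrite F4E in future; rewrite /in_window /window_radius PoszM.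
by have [//|-> ->] := system_norm_le (F_mono _) (F_mono _) (F_ge1 _) (F_ge1 _) _ past future.
Qed.

End Balance.

Section Automaton.
Local Open Scope ring_scope.
Variables n c : nat.
Hypotheses (n_gt0 : (0 < n)%N) (c_lt_n : (c < n)%N).

Definition admissible (w : seq (bool * bool)) : bool :=
  [&& fib_valid (map fst w), fib_valid (map snd w) &
      all (fun k => in_window n (balance n (take k w))) (iota 0 (size w).+1)].

Lemma admissible_in_window w : admissible w -> in_window n (balance n w).
Proof.
by case/and3P=> _ _ /allP/(_ (size w)); rewrite take_size mem_iota ltnSn; apply.
Qed.

Lemma admissible_rcons w a : admissible (rcons w a) =
  [&& admissible w, ~~ (last false (map fst w) && a.1),
      ~~ (last false (map snd w) && a.2) & in_window n (balance n (rcons w a))].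
Proof.
rewrite /admissible !map_rcons !fib_valid_rcons size_rcons -addn1 iotaD all_cat add0n.
have -> : all (fun k => in_window n (balance n (take k (rcons w a)))) (iota 0 (size w).+1) =
          all (fun k => in_window n (balance n (take k w))) (iota 0 (size w).+1).
  apply: eq_in_all => k; rewrite mem_iota add0n ltnS => k_le.
  by rewrite -cats1 takel_cat.
rewrite [all _ (iota _ 1)]/= take_oversize ?size_rcons // andbT.
by case: (fib_valid _); case: (fib_valid _); case: (all _ _); case: (~~ _); case: (~~ _).
Qed.

Definition coord := 'I_(2 * window_radius n).+1.

Definition decode (i : coord) : int := (i : nat)%:Z - (window_radius n)%:Z.

Definition encode (z : int) : coord := inord (absz (z + (window_radius n)%:Z)).

Lemma encodeK z : `|z| <= (window_radius n)%:Z -> decode (encode z) = z.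
Proof. by move=> z_le; rewrite /decode inordK; lia. Qed.

Definition fib_state := (coord * coord * bool * bool)%type.

Definition state_of (w : seq (bool * bool)) : fib_state :=
  (encode (balance n w).1, encode (balance n w).2,
   last false (map fst w), last false (map snd w)).

Definition fib_delta (q : fib_state) (a : bool * bool) : option fib_state :=
  let: (i, j, last_x, last_y) := q in
  if (last_x && a.1) || (last_y && a.2) then None else
  let d := balance_step n (decode i, decode j) a in
  if in_window n d then Some (encode d.1, encode d.2, a.1, a.2) else None.

Definition fib_automaton : dfa fib_state :=
  DFA (state_of [::]) fib_delta [set q : fib_state | decode q.1.1.1 == c%:Z].

Lemma dfa_run_fib_automaton w :
  dfa_run fib_automaton w = if admissible w then Some (state_of w) else None.
Proof.
elim/last_ind: w => [|w a IH]; first by [].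
rewrite /dfa_run foldl_rcons -/(dfa_run _ w) IH admissible_rcons.
case adm_w: (admissible w) => //=.
have /andP[win1 win2] := admissible_in_window adm_w.
rewrite !encodeK // -surjective_pairing.
rewrite /state_of /balance foldl_rcons -/(balance n w) !map_rcons !last_rcons.
by case: (last false _ && _); case: (last false _ && _).
Qed.

Lemma fib_automaton_accepts w : dfa_accepts fib_automaton w = L_nc n c w.
Proof.
rewrite /dfa_accepts dfa_run_fib_automaton.
case adm_w: (admissible w); last first.
  apply/esym/negbTE; apply: contraFN adm_w => L_w.
  have /and3P[valid_x valid_y _] := L_w.
  rewrite /admissible valid_x valid_y; apply/allP => k _.
  exact: balance_take_in_window L_w.
have /andP[win1 _] := admissible_in_window adm_w.
have /and3P[valid_x valid_y _] := adm_w.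
rewrite inE /= encodeK // balance1 /L_nc valid_x valid_y /=.
by apply/eqP/eqP; lia.
Qed.

End Automaton.

Theorem theorem7 :
  exists K : nat, forall n c : nat, 1 <= n -> c < n ->
    exists (Q : finType) (A : dfa Q),
      #|Q| <= K * n ^ 2 /\ forall w : seq (bool * bool), dfa_accepts A w = L_nc n c w.
Proof.
exists 676 => n c n_gt0 c_lt_n.
exists (fib_state n), (fib_automaton n c); split; last exact: fib_automaton_accepts.
by rewrite !card_prod !card_ord card_bool /window_radius; nia.
Qed.
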